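(* Let $L,L'$ be finite simplicial complexes, $\varphi: L\to L'$ a bijective simplicial finite-fibration, and $n\ge2$. Then $$\mathrm{scat}(\varphi)\le\mathrm{scat}(L)\le\mathrm{TC}(\varphi)\le\min\{\mathrm{TC}(L),\mathrm{TC}_n(\varphi)\}\le\mathrm{TC}_n(L).$$
   Context: Simplicial complexes are abstract and edge-path connected; $K^n$ is the $n$-fold categorical product and $K\times K'$ the categorical product (vertices are tuples of vertices; a set of vertices is a simplex iff each coordinate projection is a simplex). Simplicial maps $f,g: K\to K'$ are contiguous if $f(\sigma)\cup g(\sigma)$ is a simplex for every simplex $\sigma$; $f\sim g$ if joined by a finite chain of contiguous simplicial maps. $\mathrm{SD}(\varphi_1,\dots,\varphi_m)$ for simplicial maps $K\to K'$ is the least $k\ge0$ such that $K$ is a union of subcomplexes $K_0,\dots,K_k$ with $\varphi_i|_{K_j}\sim\varphi_l|_{K_j}$ for all $i,l,j$. With $p_i: L^n\to L$ the projections: $\mathrm{TC}_n(L)=\mathrm{SD}(p_1,\dots,p_n)$, $\mathrm{TC}(L)=\mathrm{TC}_2(L)$, $\mathrm{TC}_n(\varphi)=\mathrm{SD}(\varphi\circ p_1,\dots,\varphi\circ p_n)$. For a vertex $v_0$ of $L$ and constant map $c_{v_0}: L\to L$: $\mathrm{scat}(L)=\mathrm{SD}(1_L,c_{v_0})$, $\mathrm{scat}(\varphi)=\mathrm{SD}(\varphi,\varphi\circ c_{v_0})$. $I_m$ is the complex with vertices $0,\dots,m$ and edges $\{i,i+1\}$; $\varphi$ is a simplicial finite-fibration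 if for every finite complex $N$, $m\ge1$, inclusion $i: N\times\{0\}\to N\times I_m$ and simplicial $g: N\times\{0\}\to L$, $G: N\times I_m\to L'$ with $\varphi\circ g=G\circ i$, there is simplicial $\widetilde G$ with $\widetilde G\circ i=g$, $\varphi\circ\widetilde G=G$. $\mathrm{TC}(\varphi)$ is the simplicial Schwarz genus of $\pi_\varphi: L^I\to L\times L'$, $\delta\mapsto(\delta(0),\varphi(\delta(1)))$, where $L^I$ is the simplicial path complex of $L$; the simplicial Schwarz genus of $p: E\to B$ is the least $k\ge0$ such that $B$ is a union of subcomplexes $B_0,\dots,B_k$ each admitting a simplicial $s: B_j\to E$ with $p\circ s$ the inclusion. *)

From Stdlib Require Import ClassicalEpsilon Relations.
From mathcomp Require Import all_boot.

Record complex := Complex {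
  vtx : Type;
  simplex : (vtx -> Prop) -> Prop }.

Definition nonemptyS {V : Type} (S : V -> Prop) := exists x, S x.
Definition finiteS {V : Type} (S : V -> Prop) :=
  exists l : list V, forall x, S x -> List.In x l.
Definition img {A B : Type} (f : A -> B) (S : A -> Prop) : B -> Prop :=
  fun y => exists x, S x /\ f x = y.
Definition sing {V : Type} (v : V) : V -> Prop := fun x => x = v.
Definition unionS {V : Type} (A B : V -> Prop) : V -> Prop :=
  fun x => A x \/ B x.

Definition is_complex (K : complex) : Prop :=
  (forall S, simplex K S -> nonemptyS S /\ finiteS S) /\
  (forall S T, simplex K S -> nonemptyS T -> (forall x, T x -> S x) ->
               simplex K T) /\
  (forall v : vtx K, simplex K (sing v)).

Definition finite_complex (K : complex) : Prop :=
  is_complex K /\ exists l : list (vtx K), forall v, List.In v l.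

Definition connected (K : complex) : Prop :=
  forall u v : vtx K,
    clos_refl_trans (vtx K) (fun a b => simplex K (fun x => x = a \/ x = b)) u v.

Definition prodc (K K' : complex) : complex :=
  @Complex (vtx K * vtx K')
    (fun S => nonemptyS S /\ simplex K (img fst S) /\ simplex K' (img snd S)).

Definition powc (K : complex) (n : nat) : complex :=
  @Complex ('I_n -> vtx K)
    (fun S => nonemptyS S /\ forall i : 'I_n, simplex K (img (fun t => t i) S)).

Definition Icx (m : nat) : complex :=
  @Complex 'I_m.+1
    (fun S => nonemptyS S /\
       exists i : nat, forall x : 'I_m.+1, S x -> nat_of_ord x = i \/ nat_of_ord x = i.+1).

(* Simplicial path complex L^I: direct limit of the L^{I_m} along the
   inclusions "repeat the last vertex".  A vertex is a simplicial path
   gamma : I_oo -> L which is eventually constant; a finite nonempty set of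
   paths is a simplex iff for every edge {i,i+1} of I_oo the union of the
   images is a simplex of L (i.e. it is a simplex of some L^{I_m}). *)
Definition spath (L : complex) :=
  {g : nat -> vtx L |
     (exists m, forall i, m <= i -> g i = g m) /\
     (forall i, simplex L (fun x => x = g i \/ x = g i.+1))}.

Definition pathc (L : complex) : complex :=
  @Complex (spath L)
    (fun S => nonemptyS S /\ finiteS S /\
       forall i : nat,
         simplex L (fun x => exists d : spath L,
                       S d /\ (x = proj1_sig d i \/ x = proj1_sig d i.+1))).

Definition pstart (L : complex) (d : spath L) : vtx L := proj1_sig d 0.
(* the end point delta(1): the eventual value of the path *)
Definition pend (L : complex) (d : spath L) : vtx L :=
  proj1_sig d
    (proj1_sig (constructive_indefinite_description _ (proj1 (proj2_sig d)))).

Definition simplicial (K K' : complex) (f : vtx K -> vtx K') : Prop :=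
  forall S, simplex K S -> simplex K' (img f S).

Definition subcomplex (K : complex) (P : (vtx K -> Prop) -> Prop) : Prop :=
  (forall S, P S -> simplex K S) /\
  (forall S T, P S -> nonemptyS T -> (forall x, T x -> S x) -> P T).

Definition simplicial_on (K K' : complex) (P : (vtx K -> Prop) -> Prop)
  (f : vtx K -> vtx K') : Prop :=
  forall S, P S -> simplex K' (img f S).

Definition contiguous_on (K K' : complex) (P : (vtx K -> Prop) -> Prop)
  (f g : vtx K -> vtx K') : Prop :=
  simplicial_on K K' P f /\ simplicial_on K K' P g /\
  forall S, P S -> simplex K' (unionS (img f S) (img g S)).

Definition homotopic_on (K K' : complex) (P : (vtx K -> Prop) -> Prop)
  (f g : vtx K -> vtx K') : Prop :=
  clos_refl_trans (vtx K -> vtx K') (contiguous_on K K' P) f g.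

(* Extended naturals (None = infinity) and "least k such that P k".   *)
Definition enat := option nat.
Definition ole (a b : enat) : Prop :=
  match a, b with
  | _, None => True
  | None, Some _ => False
  | Some x, Some y => x <= y
  end.
Definition omin (a b : enat) : enat :=
  match a, b with
  | None, _ => b
  | _, None => a
  | Some x, Some y => Some (minn x y)
  end.

Definition least (P : nat -> Prop) : enat :=
  match excluded_middle_informative (exists k, P k) with
  | left _ => Some (epsilon (inhabits 0%N) (fun k => P k /\ forall j, P j -> k <= j))
  | right _ => None
  end.

Definition SD_cover (K K' : complex) (I : Type) (fs : I -> vtx K -> vtx K')
  (k : nat) : Prop :=
  exists Ks : 'I_k.+1 -> (vtx K -> Prop) -> Prop,
    (forall j, subcomplex K (Ks j)) /\
    (forall S, simplex K S -> exists j, Ks j S) /\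
    (forall (i l : I) (j : 'I_k.+1), homotopic_on K K' (Ks j) (fs i) (fs l)).

Definition SD (K K' : complex) (I : Type) (fs : I -> vtx K -> vtx K') : enat :=
  least (SD_cover K K' I fs).

Definition TCn (L : complex) (n : nat) : enat :=
  @SD (powc L n) L 'I_n (fun i t => t i).
Definition TC (L : complex) : enat := TCn L 2.
Definition TCn_map (L L' : complex) (phi : vtx L -> vtx L') (n : nat) : enat :=
  @SD (powc L n) L' 'I_n (fun i t => phi (t i)).
Definition scat (L : complex) (v0 : vtx L) : enat :=
  @SD L L bool (fun b => if b then id else fun _ => v0).
Definition scat_map (L L' : complex) (phi : vtx L -> vtx L') (v0 : vtx L) : enat :=
  @SD L L' bool (fun b => if b then phi else fun _ => phi v0).

Definition genus_cover (E B : complex) (p : vtx E -> vtx B) (k : nat) : Prop :=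
  exists Bs : 'I_k.+1 -> (vtx B -> Prop) -> Prop,
    (forall j, subcomplex B (Bs j)) /\
    (forall S, simplex B S -> exists j, Bs j S) /\
    (forall j, exists s : vtx B -> vtx E,
        simplicial_on B E (Bs j) s /\
        forall v, Bs j (sing v) -> p (s v) = v).

Definition genus (E B : complex) (p : vtx E -> vtx B) : enat := least (genus_cover E B p).

Definition piphi (L L' : complex) (phi : vtx L -> vtx L') (d : vtx (pathc L)) :
  vtx (prodc L L') := (pstart L d, phi (pend L d)).

Definition TC_map (L L' : complex) (phi : vtx L -> vtx L') : enat :=
  genus (pathc L) (prodc L L') (piphi L L' phi).

(* Simplicial finite-fibration (N x {0} identified with N, i(v) = (v,0)). *)
Definition finite_fibration (L L' : complex) (phi : vtx L -> vtx L') : Prop :=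
  forall (N : complex) (m : nat), finite_complex N -> 0 < m ->
  forall (g : vtx N -> vtx L) (G : vtx N * 'I_m.+1 -> vtx L'),
    simplicial N L g -> simplicial (prodc N (Icx m)) L' G ->
    (forall v, phi (g v) = G (v, ord0)) ->
    exists Gt : vtx N * 'I_m.+1 -> vtx L,
      simplicial (prodc N (Icx m)) L Gt /\
      (forall v, Gt (v, ord0) = g v) /\
      (forall w, phi (Gt w) = G w).

From Stdlib Require Import Classical ClassicalEpsilon Relations Wf_nat
  FunctionalExtensionality PropExtensionality.
From mathcomp Require Import all_boot.

(* Post-composing the contiguity chains that define scat(L) and TC_n(L) with
   the simplicial map phi gives the outer inequalities.  A simplicial section
   of pi_phi over a subcomplex is a simplicial family of paths, i.e. a chain of
   contiguities between its evaluation maps, running from the start point to the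
   end point.  Over L x {phi v0} it deforms the identity into the constant map
   v0 (phi is injective, and L is finite so all paths stop at a common time);
   conversely a chain from the first to the second projection of L^2, or from
   psi o phi o p_1 to psi o phi o p_2 on L^n, pulled back along
   (a, b) |-> (a, psi b, ..., psi b), yields sections of pi_phi.  The inverse psi
   of phi is simplicial because of the lifting property: lifting the homotopy
   that jumps from a vertex b0 onto a simplex T of L' at time 1 exhibits psi(T)
   as the image of a simplex. *)

Lemma exists_least_nat {P : nat -> Prop} :
  (exists k, P k) -> exists m, P m /\ forall j, P j -> m <= j.
Proof.
move=> Hex.
have [m [[Pm Hm] _]] :=
  dec_inh_nat_subset_has_unique_least_element P (fun k => classic (P k)) Hex.
by exists m; split=> // j /Hm /leP.
Qed.

Lemma least_spec {P : nat -> Prop} :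
  (exists k, P k) -> exists m, least P = Some m /\ P m /\ forall j, P j -> m <= j.
Proof.
move=> Hex; rewrite /least; case: excluded_middle_informative => // _.
have [m Hm] := exists_least_nat Hex.
have [Pe He] := epsilon_spec (inhabits 0) (fun k => P k /\ forall j, P j -> k <= j)
  (ex_intro _ m Hm).
by eexists.
Qed.

Lemma least_antitone (P Q : nat -> Prop) :
  (forall k, P k -> Q k) -> ole (least Q) (least P).
Proof.
move=> PQ; case: (classic (exists k, P k)) => [HP|HP].
- have [m [-> [Pm _]]] := least_spec HP.
  have [m' [-> [_ Hm']]] := least_spec (ex_intro _ m (PQ m Pm)).
  exact: Hm' _ (PQ m Pm).
- rewrite {2}/least; case: excluded_middle_informative => //.
  by case: (least Q).
Qed.

Lemma ole_trans (a b c : enat) : ole a b -> ole b c -> ole a c.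
Proof. by case: a b c => [x|] [y|] [z|] //=; apply: leq_trans. Qed.

Lemma ole_omin (a b c : enat) : ole a b -> ole a c -> ole a (omin b c).
Proof. by case: a b c => [x|] [y|] [z|] //= Hb Hc; rewrite leq_min Hb Hc. Qed.

Lemma omin_ole_r (a b c : enat) : ole b c -> ole (omin a b) c.
Proof. by case: a b c => [x|] [y|] [z|] //=; apply: leq_trans (geq_minr x y). Qed.

Lemma predext {V : Type} (A B : V -> Prop) : (forall x, A x <-> B x) -> A = B.
Proof.
by move=> AB; apply: functional_extensionality => x; apply: propositional_extensionality.
Qed.

Lemma img_comp {A B C : Type} (h : B -> C) (f : A -> B) (S : A -> Prop) :
  img (fun x => h (f x)) S = img h (img f S).
Proof.
apply: predext => c; split; first by case=> a [Sa <-]; exists (f a); split=> //; exists a.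
by case=> _ [[a [Sa <-]] <-]; exists a.
Qed.

Lemma img_congr {A B : Type} (f g : A -> B) (S : A -> Prop) :
  (forall x, S x -> f x = g x) -> img f S = img g S.
Proof.
move=> fg; apply: predext => y.
by split; case=> x [Sx <-]; exists x; rewrite (fg x Sx).
Qed.

Lemma img_id {A : Type} (S : A -> Prop) : img (fun x => x) S = S.
Proof. by apply: predext => y; split; [case=> x [Sx <-] | exists y]. Qed.

Lemma img_sing {A B : Type} (f : A -> B) (a : A) : img f (sing a) = sing (f a).
Proof. by apply: predext => y; split; [case=> x [-> <-] | move=> ->; exists a]. Qed.

Lemma img_const {A B : Type} (b : B) (S : A -> Prop) :
  nonemptyS S -> img (fun _ => b) S = sing b.
Proof.
by move=> [a Sa]; apply: predext => y; split; [case=> x [_ <-] | move=> ->; exists a].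
Qed.

Lemma unionSC {V : Type} (A B : V -> Prop) : unionS A B = unionS B A.
Proof. by apply: predext => x; rewrite /unionS; tauto. Qed.

Lemma unionSid {V : Type} (A : V -> Prop) : unionS A A = A.
Proof. by apply: predext => x; rewrite /unionS; tauto. Qed.

Lemma img_union {A B : Type} (f : A -> B) (S T : A -> Prop) :
  img f (unionS S T) = unionS (img f S) (img f T).
Proof.
apply: predext => y; split; first by case=> x [[Sx|Tx] <-]; [left|right]; exists x.
by case=> -[x [Hx <-]]; exists x; split=> //; [left|right].
Qed.

Lemma img_nonempty {A B : Type} (f : A -> B) {S : A -> Prop} :
  nonemptyS S -> nonemptyS (img f S).
Proof. by case=> a Sa; exists (f a); exists a. Qed.

Lemma img_sub {A B : Type} (f : A -> B) {S T : A -> Prop} :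
  (forall x, T x -> S x) -> forall y, img f T y -> img f S y.
Proof. by move=> TS y [x [Tx <-]]; exists x; split=> //; apply: TS. Qed.

Section Complexes.

Context {K : complex} (HK : is_complex K).

Lemma simplex_nonempty S : simplex K S -> nonemptyS S.
Proof. by move/(proj1 HK) => []. Qed.

Lemma simplex_sub S T :
  simplex K S -> nonemptyS T -> (forall x, T x -> S x) -> simplex K T.
Proof. exact: (proj1 (proj2 HK)). Qed.

Lemma simplex_sing v : simplex K (sing v).
Proof. exact: (proj2 (proj2 HK)). Qed.

Lemma simplex_img_sub {A : Type} (f : A -> vtx K) (S T : A -> Prop) :
  simplex K (img f S) -> nonemptyS T -> (forall x, T x -> S x) ->
  simplex K (img f T).
Proof. by move=> HS /(img_nonempty f) HT /(img_sub f); apply: simplex_sub. Qed.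

Lemma subcomplex_sing P S x : subcomplex K P -> P S -> S x -> P (sing x).
Proof. by move=> [_ HP] PS Sx; apply: HP PS _ _; [exists x | move=> y ->]. Qed.

End Complexes.

Lemma is_complex_prodc {L L' : complex} :
  is_complex L -> is_complex L' -> is_complex (prodc L L').
Proof.
move=> HL HL'; split; [|split].
- move=> S [HS [H1 H2]]; split=> //.
  have [_ [l1 F1]] := proj1 HL _ H1; have [_ [l2 F2]] := proj1 HL' _ H2.
  exists (List.list_prod l1 l2) => -[a b] Sab.
  by apply: List.in_prod; [apply: F1 | apply: F2]; exists (a, b).
- move=> S T [_ [H1 H2]] HT TS; split=> //.
  by split; apply: simplex_img_sub TS.
- move=> v; split; first by exists v.
  by rewrite !img_sing; split; apply: simplex_sing.
Qed.

Lemma simplicial_comp {K K' K'' : complex} {f : vtx K -> vtx K'} {g : vtx K' -> vtx K''} :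
  simplicial K K' f -> simplicial K' K'' g -> simplicial K K'' (fun x => g (f x)).
Proof. by move=> Hf Hg S HS; rewrite (img_comp g f); apply: Hg; apply: Hf. Qed.

Lemma simplicial_const (K K' : complex) (c : vtx K') :
  is_complex K -> is_complex K' -> simplicial K K' (fun _ => c).
Proof. by move=> HK HK' S /(simplex_nonempty HK) /(img_const c) ->; apply: simplex_sing. Qed.

Lemma simplicial_fst (L L' : complex) : simplicial (prodc L L') L fst.
Proof. by move=> S [_ []]. Qed.

Lemma simplicial_snd (L L' : complex) : simplicial (prodc L L') L' snd.
Proof. by move=> S [_ []]. Qed.

Lemma simplicial_proj (L : complex) (n : nat) (i : 'I_n) :
  simplicial (powc L n) L (fun t => t i).
Proof. by move=> S [_]. Qed.

Section Contiguity.

Context {K K' : complex} (P : (vtx K -> Prop) -> Prop).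

Lemma contiguous_on_sym (f g : vtx K -> vtx K') :
  contiguous_on K K' P f g -> contiguous_on K K' P g f.
Proof.
by move=> [Hf [Hg Hfg]]; do 2 split=> //; move=> S; rewrite unionSC; apply: Hfg.
Qed.

Lemma homotopic_on_sym (f g : vtx K -> vtx K') :
  homotopic_on K K' P f g -> homotopic_on K K' P g f.
Proof.
elim=> [f' g' /contiguous_on_sym|f'|f' g' h' _ IH1 _ IH2].
- exact: rt_step.
- exact: rt_refl.
- exact: rt_trans IH2 IH1.
Qed.

Lemma contiguous_on_comp {K'' : complex} (f g : vtx K -> vtx K') (h : vtx K' -> vtx K'') :
  simplicial K' K'' h -> contiguous_on K K' P f g ->
  contiguous_on K K'' P (fun x => h (f x)) (fun x => h (g x)).
Proof.
move=> Hh [Hf [Hg Hfg]]; split; [|split] => S PS.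
- by rewrite (img_comp h f); apply: Hh; apply: Hf.
- by rewrite (img_comp h g); apply: Hh; apply: Hg.
- by rewrite (img_comp h f) (img_comp h g) -img_union; apply: Hh; apply: Hfg.
Qed.

Lemma homotopic_on_comp {K'' : complex} (f g : vtx K -> vtx K') (h : vtx K' -> vtx K'') :
  simplicial K' K'' h -> homotopic_on K K' P f g ->
  homotopic_on K K'' P (fun x => h (f x)) (fun x => h (g x)).
Proof.
move=> Hh; elim=> [f' g' Hc|f'|f' g' h' _ IH1 _ IH2].
- by apply: rt_step; apply: contiguous_on_comp.
- exact: rt_refl.
- exact: rt_trans IH1 IH2.
Qed.

Lemma contiguous_on_of_union (f g : vtx K -> vtx K') :
  is_complex K' -> (forall S, P S -> nonemptyS S) ->
  (forall S, P S -> simplex K' (unionS (img f S) (img g S))) ->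
  contiguous_on K K' P f g.
Proof.
move=> HK' Pne Hfg.
have sub_union h S : P S -> (forall y, img h S y -> unionS (img f S) (img g S) y) ->
    simplex K' (img h S).
  move=> PS; apply: (simplex_sub HK' _ _ (Hfg S PS)); apply: img_nonempty; exact: Pne.
by split; [|split] => // S PS; apply: sub_union => // y Hy; [left|right].
Qed.

Lemma contiguous_on_refl (f : vtx K -> vtx K') :
  simplicial_on K K' P f -> contiguous_on K K' P f f.
Proof.
by move=> Hf; do 2 split=> //; move=> S; rewrite unionSid; apply: Hf.
Qed.

Hypothesis subP : subcomplex K P.

Lemma contiguous_on_congr (f g f' g' : vtx K -> vtx K') :
  (forall x, P (sing x) -> f x = f' x) -> (forall x, P (sing x) -> g x = g' x) ->
  contiguous_on K K' P f g -> contiguous_on K K' P f' g'.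
Proof.
move=> ff' gg' [Hf [Hg Hfg]].
have imgE (h h' : vtx K -> vtx K') S :
    (forall x, P (sing x) -> h x = h' x) -> P S -> img h' S = img h S.
  by move=> hh' PS; apply: img_congr => x Sx; rewrite hh' //; apply: subcomplex_sing PS Sx.
split; [|split] => S PS; rewrite ?(imgE f f' S ff' PS) ?(imgE g g' S gg' PS).
- exact: Hf.
- exact: Hg.
- exact: Hfg.
Qed.

Lemma contiguous_on_of_eq (f g : vtx K -> vtx K') :
  simplicial_on K K' P f -> (forall x, P (sing x) -> f x = g x) ->
  contiguous_on K K' P f g.
Proof.
by move=> Hf fg; apply: (contiguous_on_congr f f f g) => //; apply: contiguous_on_refl.
Qed.

End Contiguity.

Lemma homotopic_on_chain {K K' : complex} {P} {f g : vtx K -> vtx K'} :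
  homotopic_on K K' P f g -> simplicial_on K K' P g ->
  exists (F : nat -> vtx K -> vtx K') (r : nat),
    [/\ F 0 = f, forall i, r <= i -> F i = g
      & forall i, contiguous_on K K' P (F i) (F i.+1)].
Proof.
move=> Hfg; elim: (clos_rt_rt1n _ _ _ _ Hfg) => [h|h h' h'' hh' _ IH] Hg.
- by exists (fun _ => h), 0; split=> // i; apply: contiguous_on_refl.
- have [F [r [F0 Fr Fc]]] := IH Hg.
  exists (fun i => if i is i'.+1 then F i' else h), r.+1; split=> //.
  + by case=> // i /Fr.
  + by case=> [|i] //=; rewrite F0.
Qed.

Lemma SD_comp (K K' K'' : complex) (I : Type) (fs : I -> vtx K -> vtx K')
    (h : vtx K' -> vtx K'') :
  simplicial K' K'' h -> ole (SD K K'' I (fun i x => h (fs i x))) (SD K K' I fs).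
Proof.
move=> Hh; apply: least_antitone => k [Ks [Hsub [Hcov Hhom]]].
exists Ks; do 2 split=> //.
by move=> i l j; apply: homotopic_on_comp; [exact: Hh | exact: Hhom].
Qed.

Definition pullback (X K : complex) (e : vtx X -> vtx K) (Q : (vtx K -> Prop) -> Prop) :
  (vtx X -> Prop) -> Prop :=
  fun S => simplex X S /\ Q (img e S).

Section Pullback.

Context {X K : complex} (e : vtx X -> vtx K).

Lemma subcomplex_pullback {Q} :
  is_complex X -> subcomplex K Q -> subcomplex X (pullback X K e Q).
Proof.
move=> HX [_ HQ]; split=> [S []//|S T [HS QS] HT TS]; split.
- exact: simplex_sub HX _ _ HS HT TS.
- exact: HQ _ _ QS (img_nonempty e HT) (img_sub e TS).
Qed.

Lemma pullback_covers k (Qs : 'I_k.+1 -> (vtx K -> Prop) -> Prop) :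
  simplicial X K e -> (forall S, simplex K S -> exists j, Qs j S) ->
  forall S, simplex X S -> exists j, pullback X K e (Qs j) S.
Proof. by move=> He cov S HS; have [j Hj] := cov _ (He S HS); exists j. Qed.

Lemma homotopic_on_pullback {L : complex} {Q} {f g : vtx K -> vtx L} :
  homotopic_on K L Q f g ->
  homotopic_on X L (pullback X K e Q) (fun x => f (e x)) (fun x => g (e x)).
Proof.
elim=> [f' g' [Hf [Hg Hfg]]|f'|f' g' h' _ IH1 _ IH2].
- apply: rt_step; split; [|split] => S [_ QS].
  + by rewrite (img_comp f' e); apply: Hf.
  + by rewrite (img_comp g' e); apply: Hg.
  + by rewrite (img_comp f' e) (img_comp g' e); apply: Hfg.
- exact: rt_refl.
- exact: rt_trans IH1 IH2.
Qed.

End Pullback.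

Section Paths.

Context {L : complex}.

Definition path_eval {A : Type} (sigma : A -> spath L) (i : nat) : A -> vtx L :=
  fun x => proj1_sig (sigma x) i.

Definition pend_index (d : spath L) : nat :=
  proj1_sig (constructive_indefinite_description _ (proj1 (proj2_sig d))).

Lemma pend_stable (d : spath L) i : pend_index d <= i -> proj1_sig d i = pend L d.
Proof.
by rewrite /pend_index /pend; case: constructive_indefinite_description => m Hm /=; apply: Hm.
Qed.

Lemma path_eval_stable {A : Type} {l : list A} (sigma : A -> spath L) :
  (forall x, List.In x l) -> exists M, path_eval sigma M = fun x => pend L (sigma x).
Proof.
move=> Hl; suff [M HM] : exists M, forall x, List.In x l -> forall i, M <= i ->
    proj1_sig (sigma x) i = pend L (sigma x).
  by exists M; apply: functional_extensionality => x; apply: HM.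
elim: l {Hl} => [|a l [M HM]]; first by exists 0.
exists (maxn (pend_index (sigma a)) M) => x [<-|Hx] i Hi.
- by apply: pend_stable; apply: leq_trans Hi; apply: leq_maxl.
- by apply: HM => //; apply: leq_trans Hi; apply: leq_maxr.
Qed.

Lemma pathc_edge_img {A : Type} (sigma : A -> spath L) (S : A -> Prop) i :
  (fun x => exists d, img sigma S d /\ (x = proj1_sig d i \/ x = proj1_sig d i.+1)) =
  unionS (img (path_eval sigma i) S) (img (path_eval sigma i.+1) S).
Proof.
apply: predext => x; split.
- by case=> _ [[y [Sy <-]] [->|->]]; [left|right]; exists y.
- by case=> -[y [Sy <-]]; exists (sigma y); (split; first by exists y); [left|right].
Qed.

Context {K : complex} (P : (vtx K -> Prop) -> Prop).

Lemma simplicial_on_pathc (sigma : vtx K -> spath L) :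
  (forall S, P S -> nonemptyS S /\ finiteS S) ->
  (forall i, contiguous_on K L P (path_eval sigma i) (path_eval sigma i.+1)) ->
  simplicial_on K (pathc L) P sigma.
Proof.
move=> Pfin Hc S PS; have [HSne [l Hl]] := Pfin S PS.
split; [exact: img_nonempty | split].
- by exists (List.map sigma l) => _ [x [Sx <-]]; apply: List.in_map; apply: Hl.
- by move=> i; rewrite pathc_edge_img; have [_ [_ Hu]] := Hc i; apply: Hu.
Qed.

Lemma contiguous_on_path_eval (sigma : vtx K -> spath L) :
  is_complex L -> (forall S, P S -> nonemptyS S) ->
  simplicial_on K (pathc L) P sigma ->
  forall i, contiguous_on K L P (path_eval sigma i) (path_eval sigma i.+1).
Proof.
move=> HL Pne Hs i; apply: contiguous_on_of_union => // S /Hs [_ [_ /(_ i)]].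
by rewrite pathc_edge_img.
Qed.

Lemma homotopic_on_pstart_pend (sigma : vtx K -> spath L) :
  is_complex L -> (exists l : list (vtx K), forall x, List.In x l) ->
  (forall S, P S -> nonemptyS S) -> simplicial_on K (pathc L) P sigma ->
  homotopic_on K L P (fun x => pstart L (sigma x)) (fun x => pend L (sigma x)).
Proof.
move=> HL [l Hl] Pne Hs; have [M <-] := path_eval_stable sigma Hl.
elim: M => [|M IH]; first exact: rt_refl.
apply: rt_trans IH (rt_step _ _ _ _ _).
exact: contiguous_on_path_eval.
Qed.

Hypotheses (HK : is_complex K) (HL : is_complex L) (subP : subcomplex K P).

Lemma path_map_of_homotopy (f g : vtx K -> vtx L) :
  homotopic_on K L P f g -> simplicial_on K L P g ->
  exists sigma : vtx K -> spath L,
    simplicial_on K (pathc L) P sigma /\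
    forall x, P (sing x) -> pstart L (sigma x) = f x /\ pend L (sigma x) = g x.
Proof.
move=> Hfg Hg; have [F [r [F0 Fr Fc]]] := homotopic_on_chain Hfg Hg.
(* Only over vertices of P is the chain a sequence of edges; elsewhere the
   path is constant. *)
pose path x i := if excluded_middle_informative (P (sing x)) then F i x else f x.
have pathE x : P (sing x) -> forall i, path x i = F i x.
  by rewrite /path; case: excluded_middle_informative.
have pathP x : (exists m, forall i, m <= i -> path x i = path x m) /\
               (forall i, simplex L (fun y => y = path x i \/ y = path x i.+1)).
  rewrite /path; case: excluded_middle_informative => Px; last first.
    split=> [|i]; first by exists 0.
    apply: (simplex_sub HL (sing (f x))); first exact: simplex_sing.
      by exists (f x); left.
    by move=> y [->|->].
  split; first by exists r => i /Fr ->; rewrite Fr.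
  by move=> i; have [_ [_ /(_ _ Px)]] := Fc i; rewrite !img_sing.
pose sigma x : spath L := exist _ (path x) (pathP x).
exists sigma; split.
- apply: simplicial_on_pathc => [S /(proj1 subP) /(proj1 HK) //|i].
  by apply: (contiguous_on_congr _ subP (F i) (F i.+1)) => // x Px;
    rewrite /path_eval /= pathE.
- move=> x Px; split; first by rewrite /pstart /= pathE // F0.
  rewrite -(pend_stable (sigma x) (maxn (pend_index (sigma x)) r)) ?leq_maxl //=.
  by rewrite pathE // Fr // leq_maxr.
Qed.

End Paths.

Lemma scat_map_le_scat (L L' : complex) (phi : vtx L -> vtx L') (v0 : vtx L) :
  simplicial L L' phi -> ole (scat_map L L' phi v0) (scat L v0).
Proof.
move=> Hphi; rewrite /scat_map.
have -> : (fun b : bool => if b then phi else fun _ => phi v0) =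
          (fun b x => phi ((if b then id else fun _ => v0) x)).
  by apply: functional_extensionality; case.
exact: SD_comp.
Qed.

Lemma TCn_map_le_TCn (L L' : complex) (phi : vtx L -> vtx L') (n : nat) :
  simplicial L L' phi -> ole (TCn_map L L' phi n) (TCn L n).
Proof. exact: SD_comp. Qed.

Lemma scat_le_TC_map (L L' : complex) (phi : vtx L -> vtx L') (v0 : vtx L) :
  finite_complex L -> is_complex L' -> injective phi ->
  ole (scat L v0) (TC_map L L' phi).
Proof.
move=> [HL Lfin] HL' phi_inj; apply: least_antitone => k [Bs [Bsub [Bcov Bsec]]].
pose iota a : vtx (prodc L L') := (a, phi v0).
have Hiota : simplicial L (prodc L L') iota.
  move=> S HS; have HSne := simplex_nonempty HL _ HS.
  split; first exact: img_nonempty.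
  rewrite -!img_comp img_id img_const //; split=> //; exact: simplex_sing.
exists (fun j => pullback L _ iota (Bs j)); split; [|split].
- by move=> j; apply: subcomplex_pullback.
- exact: pullback_covers.
move=> b1 b2 j; have [s [Hs Hsec]] := Bsec j.
set P := pullback L _ iota (Bs j).
have subP : subcomplex L P by apply: subcomplex_pullback.
have Pne S : P S -> nonemptyS S by case=> /(simplex_nonempty HL).
have Hsigma : simplicial_on L (pathc L) P (fun a => s (iota a)).
  by move=> S [_ HS]; rewrite (img_comp s iota); apply: Hs.
have Hpi a : P (sing a) -> piphi L L' phi (s (iota a)) = iota a.
  by case=> _; rewrite img_sing => /Hsec.
have Hcontr : homotopic_on L L P id (fun _ => v0).
  apply: (rt_trans _ _ _ (fun a => pstart L (s (iota a)))).
    apply: rt_step; apply: contiguous_on_of_eq => //.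
    - by move=> S [HS _]; rewrite img_id.
    - by move=> a /Hpi [].
  apply: (rt_trans _ _ _ (fun a => pend L (s (iota a)))).
    exact: homotopic_on_pstart_pend.
  apply: rt_step; apply: contiguous_on_sym; apply: contiguous_on_of_eq => //.
  - by move=> S /Pne HS; rewrite img_const //; apply: simplex_sing.
  - by move=> a /Hpi [_ /phi_inj].
by case: b1; case: b2; [apply: rt_refl | | apply: homotopic_on_sym | apply: rt_refl].
Qed.

Lemma TC_map_le_SD (L L' K : complex) (phi : vtx L -> vtx L') (I : Type)
    (fs : I -> vtx K -> vtx L) (i l : I) (e : vtx (prodc L L') -> vtx K) :
  is_complex L -> is_complex L' -> simplicial (prodc L L') K e ->
  simplicial K L (fs l) -> (forall v, fs i (e v) = v.1) ->
  (forall v, phi (fs l (e v)) = v.2) ->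
  ole (TC_map L L' phi) (SD K L I fs).
Proof.
move=> HL HL' He Hl Hi_e Hl_e; apply: least_antitone => k [Ks [Ksub [Kcov Khom]]].
have HX := is_complex_prodc HL HL'.
exists (fun j => pullback (prodc L L') K e (Ks j)); split; [|split].
- by move=> j; apply: subcomplex_pullback.
- exact: pullback_covers.
move=> j; have subP := subcomplex_pullback e HX (Ksub j).
have [|sigma [Hsigma Hends]] :=
  path_map_of_homotopy _ HX HL subP _ _ (homotopic_on_pullback e (Khom i l j)).
  by move=> S [_ HS]; rewrite (img_comp (fs l) e); apply: Hl; apply: (proj1 (Ksub j)).
exists sigma; split=> // v /Hends [Hstart Hend].
by rewrite /piphi Hstart Hend Hi_e Hl_e; case: v {Hstart Hend}.
Qed.

Definition tuple_with_head {A : Type} (n : nat) (a b : A) : 'I_n -> A :=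
  fun i => if nat_of_ord i == 0 then a else b.

Lemma simplicial_tuple_with_head (K L : complex) (n : nat) (f g : vtx K -> vtx L) :
  is_complex K -> simplicial K L f -> simplicial K L g ->
  simplicial K (powc L n) (fun x => tuple_with_head n (f x) (g x)).
Proof.
move=> HK Hf Hg S HS; split; first by apply: img_nonempty; apply: simplex_nonempty HK _ HS.
move=> i; rewrite -img_comp /tuple_with_head.
by case: (nat_of_ord i == 0); [apply: Hf | apply: Hg].
Qed.

Section PullbackAlongInverse.

Variables (L L' : complex) (phi : vtx L -> vtx L') (psi : vtx L' -> vtx L).
Hypotheses (HL : is_complex L) (HL' : is_complex L').
Hypotheses (Hpsi : simplicial L' L psi) (psiK : cancel psi phi).

Let embed n (v : vtx (prodc L L')) : 'I_n -> vtx L := tuple_with_head n v.1 (psi v.2).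

Lemma simplicial_embed n : simplicial (prodc L L') (powc L n) (embed n).
Proof.
apply: simplicial_tuple_with_head; first exact: is_complex_prodc.
- exact: simplicial_fst.
- exact: simplicial_comp (simplicial_snd L L') Hpsi.
Qed.

Lemma TC_map_le_TC : ole (TC_map L L' phi) (TC L).
Proof.
apply: (TC_map_le_SD L L' (powc L 2) phi 'I_2 (fun i t => t i) ord0 ord_max (embed 2) HL HL').
- exact: simplicial_embed.
- exact: simplicial_proj.
- by [].
- by move=> v; rewrite /embed /tuple_with_head /= psiK.
Qed.

Lemma TC_map_le_TCn_map n :
  simplicial L L' phi -> cancel phi psi -> 2 <= n ->
  ole (TC_map L L' phi) (TCn_map L L' phi n).
Proof.
move=> Hphi phiK n_ge2.
rewrite /TCn_map.
apply: (ole_trans _ _ _ _ (SD_comp (powc L n) _ _ _ (fun i t => phi (t i)) _ Hpsi)).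
apply: (TC_map_le_SD L L' (powc L n) phi 'I_n (fun i t => psi (phi (t i)))
          (Ordinal (ltnW n_ge2)) (Ordinal n_ge2) (embed n) HL HL').
- exact: simplicial_embed.
- exact: simplicial_comp (simplicial_comp (simplicial_proj _ _ _) Hphi) Hpsi.
- by move=> v; rewrite /embed /tuple_with_head /= phiK.
- by move=> v; rewrite /embed /tuple_with_head /= !psiK.
Qed.

End PullbackAlongInverse.

Definition simplex_and_points {V : Type} (T : V -> Prop) : complex :=
  @Complex V (fun S => nonemptyS S /\
    ((forall x, S x -> T x) \/ exists v, forall x, S x -> x = v)).

Lemma finite_simplex_and_points {V : Type} (T : V -> Prop) :
  finiteS T -> (exists l : list V, forall v, List.In v l) ->
  finite_complex (simplex_and_points T).
Proof.
move=> [lT HlT] Vfin; split=> //; split; [|split].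
- move=> S [Sne [ST|[v Sv]]]; split=> //.
  + by exists lT => x /ST /HlT.
  + by exists [:: v] => x /Sv ->; left.
- move=> S S' [_ [ST|[v Sv]]] S'ne S'S; split=> //.
  + by left=> x /S'S /ST.
  + by right; exists v => x /S'S /Sv.
- by move=> v; split; [exists v | right; exists v].
Qed.

Lemma simplicial_inverse_of_fibration (L L' : complex) (phi : vtx L -> vtx L')
    (psi : vtx L' -> vtx L) :
  is_complex L -> finite_complex L' -> cancel phi psi -> cancel psi phi ->
  finite_fibration L L' phi -> simplicial L' L psi.
Proof.
move=> HL [HL' L'fin] phiK psiK Hfib T HT.
have [[b0 Tb0] Tfin] := proj1 HL' _ HT.
have HN := finite_simplex_and_points _ Tfin L'fin.
pose top (p : vtx (simplex_and_points T) * 'I_2) := T p.1 /\ nat_of_ord p.2 = 1.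
pose G p := if excluded_middle_informative (top p) then p.1 else b0.
have HG : simplicial (prodc (simplex_and_points T) (Icx 1)) L' G.
  move=> S [Sne _]; apply: (simplex_sub HL' _ _ HT); first exact: img_nonempty.
  by move=> _ [p [_ <-]]; rewrite /G; case: excluded_middle_informative => [[]|].
have compat v : phi (psi b0) = G (v, ord0).
  by rewrite psiK /G; case: excluded_middle_informative => // -[].
have [Gt [HGt [_ HGt1]]] :=
  Hfib _ 1 HN isT _ G (simplicial_const _ _ _ (proj1 HN) HL) HG compat.
have Gt_top p : top p -> Gt p = psi p.1.
  by move=> Hp; rewrite -[Gt p]phiK HGt1 /G; case: excluded_middle_informative.
have Htop : simplex (prodc (simplex_and_points T) (Icx 1)) top.
  split; first by exists (b0, ord_max).
  split; split;
    try by [exists b0; exists (b0, ord_max) | exists ord_max; exists (b0, ord_max)].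
  - by left=> _ [p [[Tp _] <-]].
  - by exists 0 => -[[|[|m]] Hm] //= _; [left | right].
have -> : img psi T = img Gt top.
  rewrite (img_congr Gt (fun p => psi p.1) top Gt_top) (img_comp psi fst).
  congr img; apply: predext => x; split; first by move=> Tx; exists (x, ord_max).
  by case=> p [[Tp _] <-].
exact: HGt.
Qed.

Theorem theorem6p4 (L L' : complex) (phi : vtx L -> vtx L') (n : nat)
  (v0 : vtx L) :
  finite_complex L -> finite_complex L' -> connected L -> connected L' ->
  simplicial L L' phi -> bijective phi -> finite_fibration L L' phi -> 2 <= n ->
  ole (scat_map L L' phi v0) (scat L v0) /\
  ole (scat L v0) (TC_map L L' phi) /\
  ole (TC_map L L' phi) (omin (TC L) (TCn_map L L' phi n)) /\
  ole (omin (TC L) (TCn_map L L' phi n)) (TCn L n).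
Proof.
move=> Lfin L'fin _ _ Hphi [psi phiK psiK] Hfib n_ge2.
have [HL HL'] := (proj1 Lfin, proj1 L'fin).
have Hpsi : simplicial L' L psi.
  exact: simplicial_inverse_of_fibration HL L'fin phiK psiK Hfib.
split; first exact: scat_map_le_scat.
split; first exact: scat_le_TC_map Lfin HL' (can_inj phiK).
split; last by apply: omin_ole_r; exact: TCn_map_le_TCn Hphi.
apply: ole_omin.
- exact: TC_map_le_TC HL HL' Hpsi psiK.
- exact: TC_map_le_TCn_map HL HL' Hpsi psiK n Hphi phiK n_ge2.
Qed.
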